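(* For every positive integer $n$, the number of circular permutations of $[n]=\{1,2,\ldots,n\}$ that avoid the pattern $1342$ equals $2^{n-1}-(n-1)$.
   Context: A circular permutation of $[n]$ is an arrangement of $1,2,\ldots,n$ clockwise around a circle, two arrangements being identified if they differ by a rotation. Equivalently, it can be represented uniquely as a linear permutation $\pi_1\pi_2\cdots\pi_n$ of $[n]$ with $\pi_n=n$, whose rotations all represent the same circular permutation. The reduced form of a sequence of distinct positive integers is obtained by replacing its smallest entry by $1$, its next smallest by $2$, and so on; a pattern is such a reduced form. An occurrence of a pattern $\tau$ of length $m$ in a circular permutation $\pi$ is a sequence of $m$ letters of $\pi$ read in clockwise order and lying within one revolution (i.e., a subsequence of some rotation of the linear representation) whose reduced form is $\tau$; $\pi$ avoids $\tau$ if it has no occurrence of $\tau$. *)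

From mathcomp Require Import all_boot.
Set Implicit Arguments. Unset Strict Implicit. Unset Printing Implicit Defensive.

(* Reduced form of a sequence of distinct naturals: each entry replaced by its
   rank (1 for the smallest, 2 for the next, ...). *)
Definition reduced (u : seq nat) : seq nat :=
  map (fun x => count (fun y => y <= x) u) u.

Fixpoint subseqs (s : seq nat) : seq (seq nat) :=
  if s is x :: s' then
    let r := subseqs s' in [seq x :: t | t <- r] ++ r
  else [:: [::]].

Definition occurs_lin (tau s : seq nat) : bool :=
  has (fun t => reduced t == tau) (subseqs s).

Definition occurs_circ (tau s : seq nat) : bool :=
  has (fun r => occurs_lin tau (rot r s)) (iota 0 (size s)).

Definition avoids_circ (tau s : seq nat) : bool := ~~ occurs_circ tau s.

(* Circular permutations of [n], represented uniquely as linear permutations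
   pi_1 ... pi_n of 1..n with pi_n = n. *)
Definition circ_perms (n : nat) : seq (seq nat) :=
  [seq s <- permutations (iota 1 n) | last 0 s == n].

Definition num_avoiders (tau : seq nat) (n : nat) : nat :=
  size [seq s <- circ_perms n | avoids_circ tau s].

From mathcomp Require Import all_boot zify.
Set Implicit Arguments. Unset Strict Implicit. Unset Printing Implicit Defensive.

(* Cutting the circle just before its largest letter n, a circular permutation
   of [n] is a word w of [n-1] followed by n.  An occurrence of a rotation of
   1342 (that is, of 1342, 3421, 4213 or 2134) using n must end there with the
   largest letter of the pattern, which only 2134 allows; as 4213 and 2134 both
   contain 213, the word w n avoids 1342 circularly iff w avoids 213, 1342 and
   3421.  Such words are counted by their first letter x: if x is the maximum,
   the rest is again such a word; otherwise the rest is a permutation of the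
   letters above x avoiding 213 and 231, followed by the letters below x in
   increasing order.  In a permutation avoiding 213 and 231 the first letter is
   the minimum or the maximum, so there are 2^(m-1) of them on m letters.
   Hence c_(k+1) = c_k + (2^(k-1) + ... + 2 + 1) = c_k + 2^k - 1, and
   c_k = 2^k - k. *)

Lemma all_subseq (T : eqType) (P : pred T) u s : subseq u s -> all P s -> all P u.
Proof. by move=> /mem_subseq su /allP Ps; apply/allP => y /su /Ps. Qed.

Lemma subseq_cat_split (T : eqType) (u v w : seq T) : subseq u (v ++ w) ->
  exists u1 u2, [/\ u = u1 ++ u2, subseq u1 v & subseq u2 w].
Proof.
move=> /subseqP [m size_m ->].
exists (mask (take (size v) m) v), (mask (drop (size v) m) w).
rewrite -mask_cat ?cat_take_drop ?mask_subseq //.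
by rewrite size_takel // size_m size_cat leq_addr.
Qed.

Lemma subseq_cat_take_drop (T : eqType) (u1 u2 s : seq T) : subseq (u1 ++ u2) s ->
  exists2 r, r <= size s & subseq u1 (take r s) && subseq u2 (drop r s).
Proof.
elim: s u1 => [|x s IHs] [|y u1] /=.
- by move=> su2; exists 0.
- by [].
- by move=> su2; exists 0; rewrite ?sub0seq.
case: eqP => [-> | _] su.
  by have [r le_rs su12] := IHs _ su; exists r.+1; rewrite //= eqxx.
have [r le_rs /andP [su1 su2]] := IHs (y :: u1) su.
exists r.+1; rewrite //= su2 andbT; case: eqP => // _.
exact: cons_subseq su1.
Qed.

Lemma mem2_total (T : eqType) (s : seq T) y z :
  y \in s -> z \in s -> mem2 s y z || mem2 s z y.
Proof.
elim: s => //= x s IHs; rewrite !mem2_cons !inE.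
have [<- _ -> // | _ /= sy] := eqVneq x y.
have [<- _ | _ /= sz] := eqVneq x z; first by rewrite sy orbT.
exact: IHs.
Qed.

Lemma pairwise_subseq2 (T : eqType) (r : rel T) s :
  (forall y z, subseq [:: y; z] s -> r y z) -> pairwise r s.
Proof.
elim: s => //= y s IHs r_s; apply/andP; split.
  by apply/allP => z sz; apply: r_s; rewrite /= eqxx sub1seq.
by apply: IHs => z1 z2 sub_s; apply: r_s; apply: subseq_trans sub_s (subseq_cons _ _).
Qed.

Lemma cat_filter_predC (T : eqType) (P : pred T) s :
  (forall y z, mem2 s y z -> P z -> P y) -> filter P s ++ filter (predC P) s = s.
Proof.
elim: s => //= y s IHs closed.
have closed_s y' z : mem2 s y' z -> P z -> P y'.
  move=> s_yz; apply: closed; rewrite mem2_cons.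
  by case: eqP => // _; rewrite inE (mem2r s_yz) orbT.
case Py : (P y) => /=; first by rewrite IHs.
have no_P : filter P s = [::].
  apply/eqP; rewrite -(negbK (_ == _)) -has_filter; apply/hasPn => z sz.
  by apply: contraFN Py; apply: closed; rewrite mem2_cons eqxx inE sz orbT.
by rewrite -[in RHS](IHs closed_s) no_P.
Qed.

Lemma cat_injl (T : Type) (s : seq T) : injective (cat^~ s).
Proof.
move=> u v /= eq_uv; have size_uv : size u = size v.
  by apply/eqP; rewrite -(eqn_add2r (size s)) -!size_cat eq_uv.
by rewrite -(take_size_cat s size_uv) eq_uv take_size_cat.
Qed.

Lemma count_bij (T1 T2 : eqType) (s1 : seq T1) (s2 : seq T2) (P1 : pred T1) (P2 : pred T2)
    (f : T2 -> T1) :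
  uniq s1 -> uniq s2 -> injective f ->
  {in s2, forall y, P2 y -> (f y \in s1) && P1 (f y)} ->
  {in s1, forall x, P1 x -> exists2 y, (y \in s2) && P2 y & x = f y} ->
  count P1 s1 = count P2 s2.
Proof.
move=> uniq_s1 uniq_s2 inj_f f_into f_onto.
rewrite -!size_filter -(size_map f (filter P2 s2)); apply: perm_size.
apply: uniq_perm => [||x]; rewrite ?map_inj_uniq ?filter_uniq //.
rewrite mem_filter; apply/andP/mapP => [[P1x s1x] | [y]].
  by have [y ys2 ->] := f_onto x s1x P1x; exists y; rewrite // mem_filter andbC.
by rewrite mem_filter => /andP [P2y s2y] ->; apply/andP; rewrite andbC f_into.
Qed.

Lemma size_reduced u : size (reduced u) = size u.
Proof. exact: size_map. Qed.

Lemma reduced_rot k u : reduced (rot k u) = rot k (reduced u).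
Proof. by rewrite /reduced -map_rot; apply: eq_map => x; apply/permP; rewrite perm_rot. Qed.

Lemma reduced_rev u : reduced (rev u) = rev (reduced u).
Proof. by rewrite /reduced map_rev; congr rev; apply: eq_map => x; rewrite count_rev. Qed.

Lemma leq_rank u : {in u &, forall x y,
  (count (fun z => z <= x) u <= count (fun z => z <= y) u) = (x <= y)}.
Proof.
move=> x y ux _; apply/idP/idP => [|le_xy]; last first.
  by apply: sub_count => z /leq_trans; apply.
apply: contraTT; rewrite -!ltnNge => lt_yx.
have split_count v : count (fun z => z <= x) v =
    count (fun z => z <= y) v + count (fun z => y < z <= x) v.
  by elim: v => //= z v ->; case: (leqP z x); case: (leqP z y) => /=; lia.
rewrite split_count -addn1 leq_add2l -has_count.
by apply/hasP; exists x => /=; rewrite ?lt_yx ?leqnn.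
Qed.

Lemma reduced_map_mono (f : nat -> nat) u :
  {in u &, forall x y, (f x <= f y) = (x <= y)} -> reduced (map f u) = reduced u.
Proof.
move=> mono_f; rewrite /reduced -map_comp; apply/eq_in_map => x ux /=.
by rewrite count_map; apply: eq_in_count => y uy; rewrite /= mono_f.
Qed.

Lemma reduced_cons_max x u : all (fun y => y < x) u ->
  reduced (x :: u) = (size u).+1 :: reduced u.
Proof.
move=> /allP lt_ux; rewrite /reduced /= leqnn -count_predT add1n; congr (_ :: _).
  by congr _.+1; apply: eq_in_count => y /lt_ux /ltnW.
apply/eq_in_map => y uy /=; have := lt_ux y uy; case: leqP => //; lia.
Qed.

Lemma reduced_cons_min x u : all (fun y => x < y) u ->
  reduced (x :: u) = 1 :: map succn (reduced u).
Proof.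
move=> /allP lt_xu; rewrite /reduced /= leqnn -map_comp; congr (_ :: _).
  by apply/eqP; rewrite eqSS -leqn0 leqNgt -has_count; apply/hasPn => y /lt_xu /=; lia.
by apply/eq_in_map => y uy /=; rewrite (ltnW (lt_xu y uy)).
Qed.

Ltac reduced_eq := rewrite /reduced /=; apply/eqP/idP; [case; lia | move=> ?; repeat f_equal; lia].

Lemma reduced_eq213 a b c : (reduced [:: a; b; c] == [:: 2; 1; 3]) = (b < a < c).
Proof. reduced_eq. Qed.

Lemma reduced_eq231 a b c : (reduced [:: a; b; c] == [:: 2; 3; 1]) = (c < a < b).
Proof. reduced_eq. Qed.

Lemma reduced_eq1342 a b c d :
  (reduced [:: a; b; c; d] == [:: 1; 3; 4; 2]) = [&& a < d, d < b & b < c].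
Proof. reduced_eq. Qed.

Lemma reduced_eq3421 a b c d :
  (reduced [:: a; b; c; d] == [:: 3; 4; 2; 1]) = [&& d < c, c < a & a < b].
Proof. reduced_eq. Qed.

Lemma mem_subseqs u s : (u \in subseqs s) = subseq u s.
Proof.
elim: s u => [|x s IHs] u /=; first by rewrite inE; case: u.
rewrite mem_cat IHs; case: u => [|y u]; first by rewrite !sub0seq orbT.
have -> : (y :: u \in [seq x :: t | t <- subseqs s]) = (y == x) && (u \in subseqs s).
  apply/mapP/andP => [[t st [-> ->]] | [/eqP -> su]]; first by rewrite eqxx.
  by exists u.
rewrite IHs /=; case: eqP => [->|] //=.
by apply/orb_idr => /cons_subseq.
Qed.

Lemma occurs_linP tau s :
  reflect (exists2 u, subseq u s & reduced u = tau) (occurs_lin tau s).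
Proof.
apply: (iffP hasP) => [[u]|[u]]; first by rewrite mem_subseqs => su /eqP; exists u.
by move=> su ru; exists u; rewrite ?mem_subseqs ?ru.
Qed.

Lemma occurs_lin_subseq tau s1 s2 :
  subseq s1 s2 -> occurs_lin tau s1 -> occurs_lin tau s2.
Proof.
move=> s12 /occurs_linP [u su ru]; apply/occurs_linP.
by exists u => //; apply: subseq_trans s12.
Qed.

Lemma occurs_lin_small tau s : size s < size tau -> occurs_lin tau s = false.
Proof.
move=> lt_s_tau; apply/occurs_linP => [[u /size_subseq le_us ru]].
by move: lt_s_tau; rewrite -ru size_reduced ltnNge le_us.
Qed.

Lemma occurs_lin_trans sigma tau s :
  occurs_lin sigma tau -> occurs_lin tau s -> occurs_lin sigma s.
Proof.
move=> /occurs_linP [v /subseqP [m _ ->] <-] /occurs_linP [u su <-].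
apply/occurs_linP; exists (mask m u); first exact: subseq_trans (mask_subseq m u) su.
rewrite [reduced u]/reduced -map_mask.
symmetry; apply: reduced_map_mono => x y mx my.
by apply: leq_rank; apply: (mem_subseq (mask_subseq m u)).
Qed.

Lemma occurs_lin_rev tau s : occurs_lin (rev tau) (rev s) = occurs_lin tau s.
Proof.
apply/occurs_linP/occurs_linP => [[u su ru] | [u su <-]].
  by exists (rev u); rewrite ?reduced_rev ?ru ?revK // -subseq_rev revK.
by exists (rev u); rewrite ?subseq_rev // reduced_rev.
Qed.

Lemma occurs_lin_cons tau x t : occurs_lin tau (x :: t) =
  has (fun u => reduced (x :: u) == tau) (subseqs t) || occurs_lin tau t.
Proof. by rewrite /occurs_lin /= has_cat has_map. Qed.

Lemma occurs_lin_cons_max tau x t : all (fun y => y < x) t ->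
  head 0 tau != size tau -> occurs_lin tau (x :: t) = occurs_lin tau t.
Proof.
move=> lt_tx htau; rewrite occurs_lin_cons; case: hasP => //= [[u]].
rewrite mem_subseqs => su /eqP ru; move: htau.
by rewrite -ru reduced_cons_max ?(all_subseq su lt_tx) //= size_reduced eqxx.
Qed.

Lemma occurs_lin_cons_max_head sigma x t : all (fun y => y < x) t ->
  occurs_lin ((size sigma).+1 :: sigma) (x :: t) =
  occurs_lin sigma t || occurs_lin ((size sigma).+1 :: sigma) t.
Proof.
move=> lt_tx; rewrite occurs_lin_cons; congr (_ || _).
apply/hasP/occurs_linP => [[u] | [u su ru]].
  rewrite mem_subseqs => su; rewrite reduced_cons_max ?(all_subseq su lt_tx) //.
  by case/eqP => _ ru; exists u.
exists u; first by rewrite mem_subseqs.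
by rewrite reduced_cons_max ?(all_subseq su lt_tx) // ru -ru size_reduced.
Qed.

Lemma occurs_lin_cons_min tau x t : all (fun y => x < y) t ->
  head 0 tau != 1 -> occurs_lin tau (x :: t) = occurs_lin tau t.
Proof.
move=> lt_xt htau; rewrite occurs_lin_cons; case: hasP => //= [[u]].
rewrite mem_subseqs => su /eqP ru; move: htau.
by rewrite -ru reduced_cons_min ?(all_subseq su lt_xt).
Qed.

Lemma occurs_lin_rcons_max tau x t : all (fun y => y < x) t ->
  last 0 tau != size tau -> occurs_lin tau (rcons t x) = occurs_lin tau t.
Proof.
move=> lt_tx ltau; rewrite -occurs_lin_rev rev_rcons occurs_lin_cons_max ?all_rev //.
  by rewrite occurs_lin_rev.
by case/lastP: tau ltau => // sigma y; rewrite rev_rcons last_rcons /= size_rev size_rcons.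
Qed.

Lemma occurs_lin_rcons_max_last sigma x t : all (fun y => y < x) t ->
  occurs_lin (rcons sigma (size sigma).+1) (rcons t x) =
  occurs_lin sigma t || occurs_lin (rcons sigma (size sigma).+1) t.
Proof.
move=> lt_tx; rewrite -occurs_lin_rev !rev_rcons -(size_rev sigma).
by rewrite occurs_lin_cons_max_head ?all_rev // -rev_rcons !occurs_lin_rev.
Qed.

(** * Circular occurrences *)

Lemma occurs_circE tau s : 0 < size tau ->
  occurs_circ tau s = has (fun k => occurs_lin (rot k tau) s) (iota 0 (size tau)).
Proof.
move=> tau_gt0; apply/hasP/hasP => [[r _ /occurs_linP [u]] | [k]].
  move=> /subseq_cat_split [u1 [u2 [-> su1 su2]]] ru.
  have su : subseq (u2 ++ u1) s by rewrite -(cat_take_drop r s) cat_subseq.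
  have occ_rot : occurs_lin (rot (size u1) tau) s.
    by apply/occurs_linP; exists (u2 ++ u1); rewrite // -rot_size_cat reduced_rot ru.
  have [lt_u1 | ge_u1] := ltnP (size u1) (size tau).
    by exists (size u1); rewrite ?mem_iota.
  exists 0; first by rewrite mem_iota.
  by rewrite /= rot0 -(rot_oversize ge_u1).
rewrite mem_iota /= => lt_k /occurs_linP [u su ru].
have size_u : size u = size tau by rewrite -(size_rot k tau) -ru size_reduced.
pose j := size u - k.
have ru' : reduced (drop j u ++ take j u) = tau.
  by rewrite -/(rot j u) reduced_rot ru /j size_u -(size_rot k tau); apply: rotK.
have := @subseq_cat_take_drop _ (take j u) (drop j u) s.
rewrite cat_take_drop => /(_ su) [r _ /andP [su1 su2]].
have occ_r : occurs_lin tau (rot r s).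
  by apply/occurs_linP; exists (drop j u ++ take j u); rewrite // cat_subseq.
have [lt_rs | ge_rs] := ltnP r (size s); first by exists r; rewrite ?mem_iota.
exists 0; last by rewrite /= rot0 -(rot_oversize ge_rs).
by rewrite mem_iota add0n (leq_trans tau_gt0) // -size_u size_subseq.
Qed.

Definition avoids_lin (taus : seq (seq nat)) (s : seq nat) : bool :=
  all (fun tau => ~~ occurs_lin tau s) taus.

Definition avoids_213_231 := avoids_lin [:: [:: 2; 1; 3]; [:: 2; 3; 1]].

Definition avoids_213_1342_3421 :=
  avoids_lin [:: [:: 2; 1; 3]; [:: 1; 3; 4; 2]; [:: 3; 4; 2; 1]].

Lemma avoids_lin_subseq taus u s : subseq u s -> avoids_lin taus s -> avoids_lin taus u.
Proof.
move=> su /allP av_s; apply/allP => tau /av_s.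
by apply: contra; apply: occurs_lin_subseq.
Qed.

Lemma avoids_lin_cons_max taus x t : all (fun y => y < x) t ->
  all (fun tau => head 0 tau != size tau) taus -> avoids_lin taus (x :: t) = avoids_lin taus t.
Proof.
move=> lt_tx /allP htaus; apply: eq_in_all => tau /htaus htau.
by rewrite occurs_lin_cons_max.
Qed.

Lemma avoids_lin_cons_min taus x t : all (fun y => x < y) t ->
  all (fun tau => head 0 tau != 1) taus -> avoids_lin taus (x :: t) = avoids_lin taus t.
Proof.
move=> lt_xt /allP htaus; apply: eq_in_all => tau /htaus htau.
by rewrite occurs_lin_cons_min.
Qed.

Lemma avoids_circ_1342_rcons_max w n : all (fun y => y < n) w ->
  avoids_circ [:: 1; 3; 4; 2] (rcons w n) = avoids_213_1342_3421 w.
Proof.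
move=> lt_wn; rewrite /avoids_circ occurs_circE // /rot /= orbF.
rewrite (occurs_lin_rcons_max_last [:: 2; 1; 3]) // !occurs_lin_rcons_max //=.
have sub_2134 : occurs_lin [:: 2; 1; 3] [:: 2; 1; 3; 4] by [].
have sub_4213 : occurs_lin [:: 2; 1; 3] [:: 4; 2; 1; 3] by [].
rewrite (orb_idr (occurs_lin_trans sub_2134)) (orb_idl (occurs_lin_trans sub_4213)).
rewrite /avoids_213_1342_3421 /avoids_lin /= andbT.
by case: (occurs_lin [:: 2; 1; 3] w); rewrite /= ?orbT ?orbF ?negb_or.
Qed.

Lemma rem_iota a i k : i <= k ->
  rem (a + i) (iota a k.+1) = iota a i ++ iota (a + i).+1 (k - i).
Proof.
move=> le_ik; have -> : k.+1 = i + (k - i).+1 by lia.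
rewrite iotaD rem_filter; last by rewrite -iotaD iota_uniq.
rewrite filter_cat /= eqxx /=.
by congr (_ ++ _); apply/all_filterP/allP => y; rewrite mem_iota /=; lia.
Qed.

Lemma count_permutations_iota (P : pred (seq nat)) a k :
  count P (permutations (iota a k.+1)) =
  \sum_(0 <= i < k.+1)
     count (fun t => P (a + i :: t)) (permutations (iota a i ++ iota (a + i).+1 (k - i))).
Proof.
rewrite (permP (permutationsE _)) ?size_iota // undup_id ?iota_uniq //.
rewrite count_flatten -map_comp sumnE big_map -{1}(addKn a k.+1) -{1}[a]add0n big_addn addKn.
apply: eq_big_nat => i /andP [_ lt_ik].
by rewrite /comp count_map (addnC i) rem_iota.
Qed.

Lemma count_permutations_rcons_last (P : pred (seq nat)) l x :
  count (predI P (fun s => last 0 s == x)) (permutations (rcons l x)) =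
  count (fun w => P (rcons w x)) (permutations l).
Proof.
apply: (count_bij (f := rcons^~ x)); rewrite ?permutations_uniq //.
- exact: rcons_injl.
- move=> w; rewrite mem_permutations => perm_w Pw.
  by rewrite /= last_rcons eqxx Pw mem_permutations -!cats1 perm_cat2r perm_w.
move=> s; rewrite mem_permutations => perm_s /andP [Ps /eqP last_s].
case/lastP: s perm_s last_s Ps => [/perm_size | w y]; first by rewrite size_rcons.
rewrite last_rcons => perm_s y_x; rewrite {}y_x in perm_s * => Ps.
by exists w; rewrite // mem_permutations Ps andbT -(perm_cat2r [:: x]) !cats1.
Qed.

Lemma mem_permutations_iota a k t y :
  t \in permutations (iota a k) -> (y \in t) = (a <= y < a + k).
Proof. by rewrite mem_permutations => /perm_mem ->; rewrite mem_iota. Qed.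

(** * Permutations avoiding 213 and 231 *)

Lemma not_avoids_213_231_cons x t y z :
  y \in t -> z \in t -> y < x < z -> ~~ avoids_213_231 (x :: t).
Proof.
move=> ty tz /andP [lt_yx lt_xz]; rewrite /avoids_213_231 /avoids_lin /= andbT negb_and !negbK.
have [ne_yz ne_zy] : y != z /\ z != y by split; apply/eqP; lia.
case/orP: (mem2_total ty tz); rewrite mem2E ?(negPf ne_yz) ?(negPf ne_zy) => sub_t.
  apply/orP; left; apply/occurs_linP; exists [:: x; y; z]; first by rewrite /= eqxx.
  by apply/eqP; rewrite reduced_eq213 lt_yx.
apply/orP; right; apply/occurs_linP; exists [:: x; z; y]; first by rewrite /= eqxx.
by apply/eqP; rewrite reduced_eq231 lt_yx.
Qed.

Lemma count_avoids_213_231 a k : count avoids_213_231 (permutations (iota a k.+1)) = 2 ^ k.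
Proof.
elim: k a => [|k IHk] a.
  by rewrite count_permutations_iota big_nat1 /avoids_213_231 /avoids_lin /= !occurs_lin_small.
rewrite count_permutations_iota big_nat_recr // big_ltn // big1_seq => [|i]; last first.
  rewrite mem_index_iota => /andP [_ /andP [i_gt0 lt_ik]].
  apply/eqP; rewrite -leqn0 leqNgt -has_count; apply/hasPn => t.
  rewrite mem_permutations => /perm_mem t_mem.
  by apply: (not_avoids_213_231_cons (y := a) (z := (a + i).+1));
    rewrite ?t_mem ?mem_cat ?mem_iota; lia.
rewrite Monoid.simpm addn0 subn0 subnn cats0 expnS mul2n -addnn.
congr (_ + _); [rewrite -(IHk a.+1) | rewrite -(IHk a)]; apply: eq_in_count => t t_perm.
  rewrite /avoids_213_231 avoids_lin_cons_min //; apply/allP => y.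
  by rewrite (mem_permutations_iota _ t_perm); lia.
rewrite /avoids_213_231 avoids_lin_cons_max //; apply/allP => y.
by rewrite (mem_permutations_iota _ t_perm); lia.
Qed.

Lemma avoids_213_231_triple p q r :
  avoids_213_231 [:: p; q; r] -> ~~ (q < p < r) && ~~ (r < p < q).
Proof.
rewrite /avoids_213_231 /avoids_lin /= andbT => /andP [no213 no231].
apply/andP; split; [apply: contra no213 | apply: contra no231] => lt_pqr;
  by apply/occurs_linP; exists [:: p; q; r] => //; apply/eqP; rewrite ?reduced_eq213 ?reduced_eq231.
Qed.

Lemma avoids_213_231_quad p q r s : avoids_213_231 [:: p; q; r; s] ->
  (~~ (q < p < r) && ~~ (r < p < q)) && (~~ (r < q < s) && ~~ (s < q < r)).
Proof.
move=> av; apply/andP; split; apply: avoids_213_231_triple; apply: avoids_lin_subseq av.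
  exact: (prefix_subseq [:: p; q; r] [:: s]).
exact: subseq_cons.
Qed.

(** * Permutations avoiding 213, 1342 and 3421 *)

Lemma avoids_213_cons_split x t : x \notin t -> ~~ occurs_lin [:: 2; 1; 3] (x :: t) ->
  filter (fun y => x < y) t ++ filter (fun y => y < x) t = t.
Proof.
move=> xt no213; rewrite -[RHS](@cat_filter_predC _ (fun y => x < y)) => [|y z t_yz lt_xz].
  congr (_ ++ _); apply: eq_in_filter => y ty /=.
  have ne_yx : y != x by apply: contraNneq xt => <-.
  by rewrite /= -leqNgt ltn_neqAle ne_yx.
apply: contraNT no213; rewrite -leqNgt => le_yx.
have lt_yx : y < x by rewrite ltn_neqAle le_yx andbT; apply: contraNneq xt => <-; exact: mem2l t_yz.
apply/occurs_linP; exists [:: x; y; z]; last by apply/eqP; rewrite reduced_eq213 lt_yx.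
have ne_yz : (y == z) = false by apply/eqP; lia.
by rewrite /= eqxx; move: t_yz; rewrite mem2E ne_yz.
Qed.

Lemma avoids_3421_cons_sorted x H L : ~~ occurs_lin [:: 3; 4; 2; 1] (x :: H ++ L) ->
  has (fun y => x < y) H -> all (fun y => y < x) L -> uniq L -> sorted ltn L.
Proof.
move=> no3421 /hasP [z Hz lt_xz] /allP lt_L uniq_L.
rewrite sorted_pairwise; last exact: ltn_trans.
apply: pairwise_subseq2 => p q sub_L /=.
have := subseq_uniq sub_L uniq_L; rewrite /= inE andbT => ne_pq.
rewrite ltn_neqAle ne_pq leqNgt; apply: contraNN no3421 => lt_qp.
apply/occurs_linP; exists [:: x; z; p; q].
  by rewrite /= eqxx -cat1s cat_subseq ?sub1seq.
by apply/eqP; rewrite reduced_eq3421 lt_qp lt_xz lt_L // (mem_subseq sub_L) ?mem_head.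
Qed.

Lemma avoids_213_1342_3421_cons_high x H L : all (fun y => x < y) H ->
  avoids_213_1342_3421 (x :: H ++ L) -> avoids_213_231 H.
Proof.
move=> gt_H; rewrite /avoids_213_1342_3421 /avoids_213_231 /avoids_lin /= !andbT.
move=> /and3P [no213 no1342 _].
have sub_H : subseq H (H ++ L) := prefix_subseq H L.
apply/andP; split.
  by apply: contra no213; apply: occurs_lin_subseq; apply: subseq_trans sub_H (subseq_cons _ _).
apply: contra no1342 => /occurs_linP [u sub_u ru]; apply/occurs_linP; exists (x :: u).
  by rewrite /= eqxx; apply: subseq_trans sub_H.
by rewrite reduced_cons_min ?ru // (all_subseq sub_u gt_H).
Qed.

Lemma avoids_213_1342_3421_cons_cat x H L : all (fun y => x < y) H -> avoids_213_231 H ->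
  all (fun y => y < x) L -> sorted ltn L -> avoids_213_1342_3421 (x :: H ++ L).
Proof.
move=> gt_H av_H lt_L sorted_L; apply/allP => tau tau_in; apply/negP => /occurs_linP [u].
rewrite -cat1s => /subseq_cat_split [u0 [u12 [-> su0 /subseq_cat_split [u1 [u2 [-> su1 su2]]]]]] ru.
have gt_u1 := all_subseq su1 gt_H; have av_u1 : avoids_213_231 u1 := avoids_lin_subseq su1 av_H.
have lt_u2 := all_subseq su2 lt_L; have sorted_u2 := subseq_sorted ltn_trans su2 sorted_L.
have size_u : size (u0 ++ u1 ++ u2) = size tau by rewrite -ru size_reduced.
clear su1 su2.
have {su0} u0E : u0 = [::] \/ u0 = [:: x].
  clear -su0; case: u0 su0 => [|y [|z u0]]; [by left | | by move/size_subseq].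
  by rewrite sub1seq mem_seq1 => /eqP ->; right.
move: tau_in ru size_u; case: u0E => ->; rewrite !inE => /or3P [] /eqP -> ru size_u.
all: case: u1 gt_u1 av_u1 size_u ru => [|p1 [|p2 [|p3 [|p4 [|p5 u1]]]]] gt_u1 av_u1 size_u ru;
     case: u2 lt_u2 sorted_u2 size_u ru => [|q1 [|q2 [|q3 [|q4 [|q5 u2]]]]]
       lt_u2 sorted_u2 size_u ru //.
all: lazymatch type of av_u1 with
  | is_true (avoids_213_231 [:: _; _; _; _]) => move/avoids_213_231_quad: av_u1
  | is_true (avoids_213_231 [:: _; _; _]) => move/avoids_213_231_triple: av_u1
  | _ => idtac
  end.
all: move/eqP: ru; rewrite ?reduced_eq213 ?reduced_eq1342 ?reduced_eq3421.
all: move: gt_u1 lt_u2 sorted_u2 => /=; lia.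
Qed.

Lemma count_avoids_213_1342_3421_cons a i h : 0 < h ->
  count (fun t => avoids_213_1342_3421 (a + i :: t))
        (permutations (iota a i ++ iota (a + i).+1 h)) =
  count avoids_213_231 (permutations (iota (a + i).+1 h)).
Proof.
move=> h_gt0; set x := a + i; set L := iota a i; set H := iota x.+1 h.
have gt_H : all (fun y => x < y) H by apply/allP => y; rewrite mem_iota; lia.
have lt_L : all (fun y => y < x) L by apply/allP => y; rewrite mem_iota /x; lia.
apply: (count_bij (f := cat^~ L)); rewrite ?permutations_uniq //; first exact: cat_injl.
  move=> H'; rewrite !mem_permutations => perm_H' av_H'.
  rewrite perm_catC perm_cat2l perm_H' avoids_213_1342_3421_cons_cat ?iota_ltn_sorted //.
  by rewrite (perm_all _ perm_H').
move=> t; rewrite mem_permutations => perm_t av_t.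
have mem_t y : (y \in t) = (a <= y < x) || (x < y < x.+1 + h).
  by rewrite (perm_mem perm_t) mem_cat !mem_iota.
have uniq_t : uniq t.
  rewrite (perm_uniq perm_t) cat_uniq !iota_uniq andbT.
  by apply/hasPn => y; rewrite !mem_iota /x; lia.
have split_t : filter (fun y => x < y) t ++ filter (fun y => y < x) t = t.
  by apply: avoids_213_cons_split; [rewrite mem_t; lia | case/andP: av_t].
have sorted_lo : sorted ltn (filter (fun y => y < x) t).
  apply: (@avoids_3421_cons_sorted x (filter (fun y => x < y) t));
    rewrite ?filter_all ?filter_uniq //.
    by move: av_t; rewrite -{1}split_t /avoids_213_1342_3421 /avoids_lin /= andbT => /and3P [].
  by apply/hasP; exists x.+1; rewrite // mem_filter mem_t; lia.
have lo_eq : filter (fun y => y < x) t = L.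
  apply: (irr_sorted_eq ltn_trans ltnn sorted_lo (iota_ltn_sorted a i)) => y.
  by rewrite mem_filter mem_t mem_iota /x; lia.
exists (filter (fun y => x < y) t); last by rewrite -lo_eq split_t.
rewrite mem_permutations; apply/andP; split.
  apply: uniq_perm; rewrite ?filter_uniq ?iota_uniq // => y.
  by rewrite mem_filter mem_t mem_iota; lia.
apply: (@avoids_213_1342_3421_cons_high x _ (filter (fun y => y < x) t)); first exact: filter_all.
by rewrite split_t.
Qed.

Lemma sum_exp2_pred k : \sum_(0 <= i < k) 2 ^ (k - i).-1 = (2 ^ k).-1.
Proof.
elim: k => [|k IHk]; first by rewrite big_geq.
rewrite big_nat_recl // subn0 /=.
under eq_big_nat => i _ do rewrite subSS.
by rewrite IHk expnS; have := expn_gt0 2 k; lia.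
Qed.

Lemma count_avoids_213_1342_3421 a k :
  count avoids_213_1342_3421 (permutations (iota a k)) = 2 ^ k - k.
Proof.
elim: k a => [|k IHk] a; first by [].
rewrite count_permutations_iota big_nat_recr // subnn cats0.
rewrite (eq_big_nat _ _ (F2 := fun i => 2 ^ (k - i).-1)) => [|i /andP [_ lt_ik]]; last first.
  rewrite count_avoids_213_1342_3421_cons ?subn_gt0 //.
  by rewrite -[k - i]prednK ?subn_gt0 // count_avoids_213_231.
rewrite sum_exp2_pred (@eq_in_count _ _ avoids_213_1342_3421) => [|t t_perm]; last first.
  rewrite /avoids_213_1342_3421 avoids_lin_cons_max //; apply/allP => y.
  by rewrite (mem_permutations_iota _ t_perm); lia.
rewrite IHk expnS /=; have := ltn_expl k (ltnSn 1); lia.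
Qed.

Theorem theorem2 (n : nat) : 0 < n ->
  num_avoiders [:: 1; 3; 4; 2] n = 2 ^ n.-1 - n.-1.
Proof.
move=> n_gt0; rewrite /num_avoiders /circ_perms -filter_predI size_filter.
have -> : iota 1 n = rcons (iota 1 n.-1) n.
  by case: n n_gt0 => // m _; rewrite -cats1 -(addn1 m) iotaD add1n addn1.
rewrite count_permutations_rcons_last -(count_avoids_213_1342_3421 1).
apply: eq_in_count => w w_perm; apply: avoids_circ_1342_rcons_max; apply/allP => y.
by rewrite (mem_permutations_iota _ w_perm); lia.
Qed.
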